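(* Let $\beta_\bullet\in\{\beta,\beta_v\}$, with $\rightsquigarrow_U$ the unbiased iteration of surface reduction and $\rightsquigarrow_{pd}$ its parallel version (as in the context). Then: 1. if $M\rightsquigarrow_{pd}N$ then $M\rightsquigarrow_U^*N$; consequently $M\rightsquigarrow_{pd}^*N$ implies $M\rightsquigarrow_U^*N$; 2. if $M\rightsquigarrow_U^*N$ then there exists $N'$ such that $M\rightsquigarrow_{pd}^*N'$ and $N\rightsquigarrow_U^*N'$.
   Context: Terms $\Lambda_{\mathcal O}$: $M::=x\mid\lambda x.M\mid MM\mid\mathsf{op}(M,\dots,M)$ with $\mathsf{op}$ in a (possibly empty) set $\mathcal O$ of operator symbols with fixed arities; values $V::=x\mid\lambda x.M$. Rules $(\lambda x.M)N\mapsto_\beta M\{N/x\}$, $(\lambda x.M)V\mapsto_{\beta_v}M\{V/x\}$; $\to=\to_{\beta_\bullet}$ is the closure under all contexts. Surface reduction $\to_s$: for $\beta$, closure of $\beta$ under head contexts $H::=[\,]\mid\lambda x.H\mid HM$; for $\beta_v$, closure of $\beta_v$ under weak contexts $W::=[\,]\mid WM\mid MW$. $\rightsquigarrow_U$: if $M\to_sM'$ then $M\rightsquigarrow_UM'$; if $M$ is $\to_s$-normal: $\lambda x.P\rightsquigarrow_U\lambda x.P'$ if $P\rightsquigarrow_UP'$; $PQ\rightsquigarrow_UP'Q$ if $P\rightsquigarrow_UP'$; $PQ\rightsquigarrow_UPQ'$ if $Q\rightsquigarrow_UQ'$; $\mathsf{op}(\dots,P_i,\dots)\rightsquigarrow_U\mathsf{op}(\dots,P_i',\dots)$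 if $P_i\rightsquigarrow_UP_i'$. Parallel reduction $\rightsquigarrow_{pd}$: (1) if $M\to_sM'$ then $M\rightsquigarrow_{pd}M'$; (2) if $M$ is $\to$-normal then $M\rightsquigarrow_{pd}M$; (3) otherwise (M is $\to_s$-normal but not $\to$-normal): $\lambda x.P\rightsquigarrow_{pd}\lambda x.P'$ if $P\rightsquigarrow_{pd}P'$; $P_1P_2\rightsquigarrow_{pd}P_1'P_2'$ if $P_1\rightsquigarrow_{pd}P_1'$ and $P_2\rightsquigarrow_{pd}P_2'$; $\mathsf{op}(P_1,\dots,P_k)\rightsquigarrow_{pd}\mathsf{op}(P_1',\dots,P_k')$ if $P_i\rightsquigarrow_{pd}P_i'$ for all $1\le i\le k$. *)

From Stdlib Require Import List Arith Relations.
Import ListNotations.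
Set Implicit Arguments.

Section Lambda.
Variable O : Type.

Inductive term : Type :=
| Var : nat -> term
| Lam : term -> term
| App : term -> term -> term
| Op  : O -> list term -> term.

Inductive wf (ar : O -> nat) : term -> Prop :=
| wf_var n : wf ar (Var n)
| wf_lam t : wf ar t -> wf ar (Lam t)
| wf_app t u : wf ar t -> wf ar u -> wf ar (App t u)
| wf_op o ts : length ts = ar o -> Forall (wf ar) ts -> wf ar (Op o ts).

Fixpoint lift (c : nat) (t : term) : term :=
  match t with
  | Var n => if n <? c then Var n else Var (S n)
  | Lam t => Lam (lift (S c) t)
  | App a b => App (lift c a) (lift c b)
  | Op o ts => Op o (map (lift c) ts)
  end.

Fixpoint subst (k : nat) (N : term) (t : term) : term :=
  match t with
  | Var n => if n =? k then N else if n <? k then Var n else Var (pred n)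
  | Lam t => Lam (subst (S k) (lift 0 N) t)
  | App a b => App (subst k N a) (subst k N b)
  | Op o ts => Op o (map (subst k N) ts)
  end.

Definition is_value (t : term) : Prop :=
  match t with Var _ | Lam _ => True | _ => False end.

(* beta_bullet : call-by-name beta or call-by-value beta_v *)
Inductive calculus := CbN | CbV.

Inductive root (s : calculus) : term -> term -> Prop :=
| root_beta M N : s = CbN -> root s (App (Lam M) N) (subst 0 N M)
| root_betav M V : s = CbV -> is_value V -> root s (App (Lam M) V) (subst 0 V M).

Inductive step (s : calculus) : term -> term -> Prop :=
| step_root M N : root s M N -> step s M N
| step_lam M M' : step s M M' -> step s (Lam M) (Lam M')
| step_appl M M' N : step s M M' -> step s (App M N) (App M' N)
| step_appr M N N' : step s N N' -> step s (App M N) (App M N')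
| step_op o l1 M M' l2 : step s M M' -> step s (Op o (l1 ++ M :: l2)) (Op o (l1 ++ M' :: l2)).

(* surface reduction: head contexts for beta, weak contexts for beta_v *)
Inductive sstep (s : calculus) : term -> term -> Prop :=
| sstep_root M N : root s M N -> sstep s M N
| sstep_lam M M' : s = CbN -> sstep s M M' -> sstep s (Lam M) (Lam M')
| sstep_appl M M' N : sstep s M M' -> sstep s (App M N) (App M' N)
| sstep_appr M N N' : s = CbV -> sstep s N N' -> sstep s (App M N) (App M N').

Definition normal (s : calculus) (M : term) : Prop := forall N, ~ step s M N.
Definition snormal (s : calculus) (M : term) : Prop := forall N, ~ sstep s M N.

Inductive ustep (s : calculus) : term -> term -> Prop :=
| u_surf M M' : sstep s M M' -> ustep s M M'
| u_lam P P' : snormal s (Lam P) -> ustep s P P' -> ustep s (Lam P) (Lam P')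
| u_appl P P' Q : snormal s (App P Q) -> ustep s P P' -> ustep s (App P Q) (App P' Q)
| u_appr P Q Q' : snormal s (App P Q) -> ustep s Q Q' -> ustep s (App P Q) (App P Q')
| u_op o l1 P P' l2 : snormal s (Op o (l1 ++ P :: l2)) -> ustep s P P' ->
    ustep s (Op o (l1 ++ P :: l2)) (Op o (l1 ++ P' :: l2)).

Inductive pd (s : calculus) : term -> term -> Prop :=
| pd_surf M M' : sstep s M M' -> pd s M M'
| pd_normal M : normal s M -> pd s M M
| pd_lam P P' : snormal s (Lam P) -> ~ normal s (Lam P) -> pd s P P' ->
    pd s (Lam P) (Lam P')
| pd_app P1 P1' P2 P2' : snormal s (App P1 P2) -> ~ normal s (App P1 P2) ->
    pd s P1 P1' -> pd s P2 P2' -> pd s (App P1 P2) (App P1' P2')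
| pd_op o ps ps' : snormal s (Op o ps) -> ~ normal s (Op o ps) ->
    Forall2 (pd s) ps ps' -> pd s (Op o ps) (Op o ps').

End Lambda.

Arguments Var {O}.

(** Everything rests on one invariant: unbiased and parallel steps from a
    surface-normal term keep it surface-normal and keep its top constructor,
    because whether [App P Q] is a root redex depends only on the top
    constructors of [P] and [Q].  Such steps therefore act inside the immediate
    subterms, so a parallel step unfolds into unbiased steps of the subterms,
    one subterm after the other.

    Conversely, take an unbiased reduction of length [n] from [M] and argue by
    induction on [n] and then on [M].  A first surface step is also a parallel
    step.  From a surface-normal [M] the reduction splits into reductions of
    length at most [n] of the immediate subterms, each caught up by parallel
    reduction by induction; since parallel reduction is total and contained in
    unbiased reduction, these parallel reductions can be padded to a common
    length and then performed simultaneously. *)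

From Stdlib Require Import List Relations Classical Arith Lia.
Import ListNotations.
Set Implicit Arguments.
Unset Strict Implicit.

Lemma Forall2_exists_mid (A B C : Type) (R1 : A -> C -> Prop) (R2 : C -> B -> Prop) l1 l2 :
  Forall2 (fun a b => exists c, R1 a c /\ R2 c b) l1 l2 ->
  exists l3, Forall2 R1 l1 l3 /\ Forall2 R2 l3 l2.
Proof.
  induction 1 as [|a b l1 l2 [c [Hac Hcb]] _ [l3 [H1 H2]]].
  - exists []; split; constructor.
  - exists (c :: l3); split; constructor; assumption.
Qed.

Lemma Forall_Forall2_impl (A B : Type) (P : A -> Prop) (R R' : A -> B -> Prop) l1 l2 :
  (forall a b, P a -> R a b -> R' a b) -> Forall P l1 -> Forall2 R l1 l2 -> Forall2 R' l1 l2.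
Proof.
  intros HPR HP HR; induction HR; inversion HP; subst; constructor; auto.
Qed.

Fixpoint iter_rel (A : Type) (R : A -> A -> Prop) (n : nat) (x y : A) : Prop :=
  match n with
  | 0 => x = y
  | S n => exists z, R x z /\ iter_rel R n z y
  end.

Section IterRel.
Variables (A : Type) (R : A -> A -> Prop).

Lemma iter_rel_rt n x y : iter_rel R n x y -> clos_refl_trans _ R x y.
Proof.
  revert x; induction n as [|n IHn]; intros x Hxy.
  - rewrite Hxy; apply rt_refl.
  - destruct Hxy as (z & Hxz & Hzy).
    apply rt_trans with z; [apply rt_step | apply IHn]; assumption.
Qed.

Lemma rt_iter_rel x y : clos_refl_trans _ R x y -> exists n, iter_rel R n x y.
Proof.
  intros Hxy; apply clos_rt_rt1n in Hxy.
  induction Hxy as [x|x z y Hxz _ [n Hzy]].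
  - exists 0; reflexivity.
  - exists (S n); exists z; split; assumption.
Qed.

Lemma iter_rel_add n m x y z : iter_rel R n x y -> iter_rel R m y z -> iter_rel R (n + m) x z.
Proof.
  revert x; induction n as [|n IHn]; intros x Hxy Hyz.
  - rewrite Hxy; exact Hyz.
  - destruct Hxy as (w & Hxw & Hwy); exists w; split; [|apply IHn]; assumption.
Qed.

Definition iter_rel_upto m x y : Prop := exists n, n <= m /\ iter_rel R n x y.

Lemma iter_rel_upto_refl m x : iter_rel_upto m x x.
Proof. exists 0; split; [apply Nat.le_0_l | reflexivity]. Qed.

Lemma iter_rel_upto_mono m m' x y : m <= m' -> iter_rel_upto m x y -> iter_rel_upto m' x y.
Proof. intros Hm (n & Hn & Hxy); exists n; split; [lia | exact Hxy]. Qed.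

Lemma iter_rel_upto_step m x y z : R x y -> iter_rel_upto m y z -> iter_rel_upto (S m) x z.
Proof. intros Hxy (n & Hn & Hyz); exists (S n); split; [lia | exists y; split; assumption]. Qed.

End IterRel.

Section Unbiased.
Variables (O : Type) (s : calculus).
Local Notation T := (term O).
Implicit Types (M N P Q : T) (ps qs : list T).
Local Notation "M ~>s N" := (sstep s M N) (at level 70).
Local Notation "M ~>U N" := (ustep s M N) (at level 70).
Local Notation "M ~>U* N" := (clos_refl_trans _ (ustep s) M N) (at level 70).
Local Notation "M ~>pd N" := (pd s M N) (at level 70).
Local Notation "M ~>pd* N" := (clos_refl_trans _ (pd s) M N) (at level 70).

Section TermInd.
Variable P : T -> Prop.
Hypothesis HVar : forall n, P (Var n).
Hypothesis HLam : forall t, P t -> P (Lam t).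
Hypothesis HApp : forall t u, P t -> P u -> P (App t u).
Hypothesis HOp : forall o ts, Forall P ts -> P (Op o ts).

Fixpoint term_ind_nested (t : T) : P t :=
  match t with
  | Var n => HVar n
  | Lam t => HLam (term_ind_nested t)
  | App t u => HApp (term_ind_nested t) (term_ind_nested u)
  | Op o ts => HOp o ((fix all (ts : list T) : Forall P ts :=
      match ts with
      | [] => Forall_nil P
      | t :: ts => Forall_cons t (term_ind_nested t) (all ts)
      end) ts)
  end.
End TermInd.

Lemma sstep_step M N : M ~>s N -> step s M N.
Proof. induction 1; [apply step_root | apply step_lam | apply step_appl | apply step_appr]; assumption. Qed.

Lemma snormal_var x : snormal s (Var x : T).
Proof. intros N HN; inversion HN; subst; match goal with H : root _ _ _ |- _ => inversion H end. Qed.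

Lemma snormal_op o (ts : list T) : snormal s (Op o ts).
Proof. intros N HN; inversion HN; subst; match goal with H : root _ _ _ |- _ => inversion H end. Qed.

Lemma snormal_lam P : snormal s (Lam P) <-> (s = CbN -> snormal s P).
Proof.
  split.
  - intros Hs E N HN; apply (Hs (Lam N)); apply sstep_lam; assumption.
  - intros HP N HN; inversion HN; subst.
    + match goal with H : root _ _ _ |- _ => inversion H end.
    + eapply HP; [reflexivity | eassumption].
Qed.

Lemma snormal_app P Q : snormal s (App P Q) <->
  snormal s P /\ (s = CbV -> snormal s Q) /\ (forall N, ~ root s (App P Q) N).
Proof.
  split.
  - intros Hs; repeat split.
    + intros N HN; apply (Hs (App N Q)); apply sstep_appl; assumption.
    + intros E N HN; apply (Hs (App P N)); apply sstep_appr; assumption.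
    + intros N HN; apply (Hs N); apply sstep_root; assumption.
  - intros (HP & HQ & Hroot) N HN; inversion HN; subst.
    + eapply Hroot; eassumption.
    + eapply HP; eassumption.
    + eapply HQ; [reflexivity | eassumption].
Qed.

Definition shape (M : T) : nat :=
  match M with Var _ => 0 | Lam _ => 1 | App _ _ => 2 | Op _ _ => 3 end.

Lemma root_shape P Q P' Q' N : root s (App P Q) N -> shape P = shape P' ->
  (s = CbV -> shape Q = shape Q') -> exists N', root s (App P' Q') N'.
Proof.
  intros Hroot HP HQ; inversion Hroot; subst; destruct P'; try discriminate.
  - eexists; apply root_beta; reflexivity.
  - specialize (HQ eq_refl).
    match goal with Hv : is_value ?V |- _ => destruct V, Q'; try discriminate; try contradiction end;
      eexists; apply root_betav; simpl; auto.
Qed.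

Lemma snormal_app_shape P Q P' Q' : snormal s (App P Q) ->
  snormal s P' -> shape P' = shape P ->
  (s = CbV -> snormal s Q' /\ shape Q' = shape Q) -> snormal s (App P' Q').
Proof.
  intros Hs HP' EP HQ'; apply snormal_app in Hs as (_ & _ & Hroot).
  apply snormal_app; repeat split; [exact HP' | intros E; apply (HQ' E)|].
  intros N HN; destruct (root_shape HN EP (fun E => proj2 (HQ' E))) as [N0 HN0].
  exact (Hroot N0 HN0).
Qed.

Lemma ustep_snormal_shape M M' : M ~>U M' -> snormal s M -> snormal s M' /\ shape M' = shape M.
Proof.
  induction 1 as [M M' HM|P P' _ _ IHP|P P' Q _ _ IHP|P Q Q' _ _ IHQ|]; intros Hs;
    try (split; [|reflexivity]).
  - exfalso; eapply Hs; eassumption.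
  - apply snormal_lam; intros E; apply IHP, snormal_lam; assumption.
  - pose proof (proj1 (snormal_app P Q) Hs) as (HP & HQ & _).
    apply snormal_app_shape with P Q; [exact Hs | apply IHP, HP..|].
    intros E; split; [exact (HQ E) | reflexivity].
  - pose proof (proj1 (snormal_app P Q) Hs) as (HP & HQ & _).
    apply snormal_app_shape with P Q; [exact Hs | exact HP | reflexivity |].
    intros E; apply IHQ, HQ, E.
  - apply snormal_op.
Qed.

Lemma ustep_rt_snormal M M' : M ~>U* M' -> snormal s M -> snormal s M'.
Proof. induction 1; eauto. intros Hs; exact (proj1 (ustep_snormal_shape H Hs)). Qed.

Lemma pd_snormal_shape M M' : M ~>pd M' -> snormal s M -> snormal s M' /\ shape M' = shape M.
Proof.
  induction 1 as [M M' HM|M _|P P' _ _ _ IHP|P1 P1' P2 P2' _ _ _ IH1 _ IH2|]; intros Hs;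
    try (split; [|reflexivity]).
  - exfalso; eapply Hs; eassumption.
  - exact Hs.
  - apply snormal_lam; intros E; apply IHP, snormal_lam; assumption.
  - pose proof (proj1 (snormal_app P1 P2) Hs) as (HP1 & HP2 & _).
    apply snormal_app_shape with P1 P2; [exact Hs | apply IH1, HP1.. |].
    intros E; apply IH2, HP2, E.
  - apply snormal_op.
Qed.

Lemma ustep_rt_ctx (f : T -> T) :
  (forall x x', snormal s (f x) -> x ~>U x' -> f x ~>U f x') ->
  forall x y, x ~>U* y -> snormal s (f x) -> f x ~>U* f y.
Proof.
  intros Hf x y Hxy; apply clos_rt_rt1n in Hxy.
  induction Hxy as [x|x z y Hxz _ IH]; intros Hs; [apply rt_refl|].
  apply rt_trans with (f z); [apply rt_step, Hf; assumption|].
  apply IH, (ustep_snormal_shape (Hf _ _ Hs Hxz) Hs).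
Qed.

Lemma ustep_rt_lam P P' : snormal s (Lam P) -> P ~>U* P' -> Lam P ~>U* Lam P'.
Proof.
  intros Hs HP; apply (ustep_rt_ctx (f := @Lam O)); [|assumption..].
  intros; apply u_lam; assumption.
Qed.

Lemma ustep_rt_app P P' Q Q' : snormal s (App P Q) -> P ~>U* P' -> Q ~>U* Q' ->
  App P Q ~>U* App P' Q'.
Proof.
  intros Hs HP HQ.
  assert (Hl : App P Q ~>U* App P' Q).
  { apply (ustep_rt_ctx (f := fun x => App x Q)); [|assumption..].
    intros; apply u_appl; assumption. }
  apply rt_trans with (App P' Q); [exact Hl|].
  apply (ustep_rt_ctx (f := App P')); [| assumption | exact (ustep_rt_snormal Hl Hs)].
  intros; apply u_appr; assumption.
Qed.

Lemma ustep_rt_op o ps qs : Forall2 (fun p q => p ~>U* q) ps qs -> Op o ps ~>U* Op o qs.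
Proof.
  intros Hpq.
  enough (H : forall l1, Op o (l1 ++ ps) ~>U* Op o (l1 ++ qs)) by exact (H []).
  induction Hpq as [|p q ps qs Hpq _ IH]; intros l1; [apply rt_refl|].
  apply rt_trans with (Op o (l1 ++ q :: ps)).
  - apply (ustep_rt_ctx (f := fun x => Op o (l1 ++ x :: ps))); [|assumption|apply snormal_op].
    intros; apply u_op; assumption.
  - specialize (IH (l1 ++ [q])); rewrite <- !app_assoc in IH; exact IH.
Qed.

Lemma pd_ustep_rt M N : M ~>pd N -> M ~>U* N.
Proof.
  revert N; induction M as [x|P IHP|P Q IHP IHQ|o ps IHps] using term_ind_nested;
    intros N HN; inversion HN; subst;
    try (apply rt_step, u_surf; assumption); try apply rt_refl.
  - apply ustep_rt_lam; auto.
  - apply ustep_rt_app; auto.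
  - apply ustep_rt_op; eapply Forall_Forall2_impl; [|exact IHps|eassumption]; auto.
Qed.

Lemma normal_lam P : normal s (Lam P) -> normal s P.
Proof. intros Hn N HN; apply (Hn (Lam N)), step_lam, HN. Qed.

Lemma normal_app P Q : normal s (App P Q) -> normal s P /\ normal s Q.
Proof.
  intros Hn; split; intros N HN.
  - apply (Hn (App N Q)), step_appl, HN.
  - apply (Hn (App P N)), step_appr, HN.
Qed.

Lemma normal_op o ps : normal s (Op o ps) -> Forall (normal s) ps.
Proof.
  intros Hn; apply Forall_forall; intros p Hp N HN.
  destruct (in_split _ _ Hp) as (l1 & l2 & ->).
  apply (Hn (Op o (l1 ++ N :: l2))), step_op, HN.
Qed.

Lemma pd_normal_eq M M' : normal s M -> M ~>pd M' -> M' = M.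
Proof.
  intros Hn HM; inversion HM; subst; try reflexivity; try contradiction.
  exfalso; eapply Hn, sstep_step; eassumption.
Qed.

Lemma pd_rt_lam P P' : snormal s (Lam P) -> P ~>pd* P' -> Lam P ~>pd* Lam P'.
Proof.
  intros Hs HP; apply clos_rt_rt1n in HP.
  induction HP as [P|P P1 P' HP1 _ IH]; [apply rt_refl|].
  destruct (classic (normal s (Lam P))) as [Hn|Hn].
  - rewrite (pd_normal_eq (normal_lam Hn) HP1) in IH; exact (IH Hs).
  - assert (Hstep : Lam P ~>pd Lam P1) by (apply pd_lam; assumption).
    apply rt_trans with (Lam P1); [apply rt_step, Hstep|].
    apply IH, (pd_snormal_shape Hstep Hs).
Qed.

Lemma pd_iter_app m P P' Q Q' : snormal s (App P Q) ->
  iter_rel (pd s) m P P' -> iter_rel (pd s) m Q Q' -> App P Q ~>pd* App P' Q'.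
Proof.
  revert P Q; induction m as [|m IH]; intros P Q Hs HP HQ.
  - rewrite HP, HQ; apply rt_refl.
  - destruct HP as (P1 & HP1 & HP), HQ as (Q1 & HQ1 & HQ).
    destruct (classic (normal s (App P Q))) as [Hn|Hn].
    + destruct (normal_app Hn) as [HnP HnQ].
      rewrite (pd_normal_eq HnP HP1) in HP; rewrite (pd_normal_eq HnQ HQ1) in HQ.
      exact (IH P Q Hs HP HQ).
    + assert (Hstep : App P Q ~>pd App P1 Q1) by (apply pd_app; assumption).
      apply rt_trans with (App P1 Q1); [apply rt_step, Hstep|].
      apply IH; [exact (proj1 (pd_snormal_shape Hstep Hs)) | assumption..].
Qed.

Lemma pd_iter_op m o ps qs : Forall2 (iter_rel (pd s) m) ps qs -> Op o ps ~>pd* Op o qs.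
Proof.
  revert ps; induction m as [|m IH]; intros ps Hpq.
  - replace qs with ps by (induction Hpq; simpl in *; congruence); apply rt_refl.
  - destruct (Forall2_exists_mid Hpq) as (rs & Hpr & Hrq).
    destruct (classic (normal s (Op o ps))) as [Hn|Hn].
    + replace rs with ps in Hrq; [exact (IH ps Hrq)|].
      clear Hpq Hrq; apply normal_op in Hn.
      induction Hpr as [|p r ps rs Hpr _ IHrs]; [reflexivity|].
      apply Forall_cons_iff in Hn as [Hnp Hnps].
      rewrite (pd_normal_eq Hnp Hpr), (IHrs Hnps); reflexivity.
    + apply rt_trans with (Op o rs); [|exact (IH rs Hrq)].
      apply rt_step, pd_op; [apply snormal_op | assumption..].
Qed.

Lemma pd_exists_of_congruence M :
  (snormal s M -> ~ normal s M -> exists M', M ~>pd M') -> exists M', M ~>pd M'.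
Proof.
  intros Hcong.
  destruct (classic (exists N, M ~>s N)) as [[N HN]|Hs]; [exists N; apply pd_surf, HN|].
  destruct (classic (normal s M)) as [Hn|Hn]; [exists M; apply pd_normal, Hn|].
  apply Hcong; [intros N HN; apply Hs; exists N; exact HN | exact Hn].
Qed.

Lemma pd_total M : exists M', M ~>pd M'.
Proof.
  induction M as [x|P [P' HP]|P Q [P' HP] [Q' HQ]|o ps IHps] using term_ind_nested;
    apply pd_exists_of_congruence; intros Hs Hn.
  - exfalso; apply Hn; intros N HN; inversion HN; subst.
    match goal with H : root _ _ _ |- _ => inversion H end.
  - exists (Lam P'); apply pd_lam; assumption.
  - exists (App P' Q'); apply pd_app; assumption.
  - assert (Hqs : exists qs, Forall2 (pd s) ps qs).
    { clear Hs Hn; induction IHps as [|p ps [q Hq] _ [qs Hqs]];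
        [exists [] | exists (q :: qs)]; constructor; assumption. }
    destruct Hqs as [qs Hqs]; exists (Op o qs); apply pd_op; assumption.
Qed.

Lemma pd_iter_total d M : exists M', iter_rel (pd s) d M M' /\ M ~>U* M'.
Proof.
  revert M; induction d as [|d IH]; intros M.
  - exists M; split; [reflexivity | apply rt_refl].
  - destruct (pd_total M) as [M1 H1], (IH M1) as (M' & H1' & HU).
    exists M'; split; [exists M1; split; assumption|].
    apply rt_trans with M1; [apply pd_ustep_rt, H1 | exact HU].
Qed.

Definition pd_joins (M N : T) : Prop := exists N', M ~>pd* N' /\ N ~>U* N'.

Definition pd_joins_in (m : nat) (M N : T) : Prop :=
  exists N', iter_rel (pd s) m M N' /\ N ~>U* N'.

Lemma pd_joins_in_mono k m M N : k <= m -> pd_joins_in k M N -> pd_joins_in m M N.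
Proof.
  intros Hkm (N' & HM & HN).
  destruct (pd_iter_total (m - k) N') as (N'' & HN' & HU).
  exists N''; split.
  - replace m with (k + (m - k)) by lia; apply iter_rel_add with N'; assumption.
  - apply rt_trans with N'; assumption.
Qed.

Lemma pd_joins_in_of_pd_joins M N : pd_joins M N -> exists k, pd_joins_in k M N.
Proof.
  intros (N' & HM & HN); destruct (rt_iter_rel HM) as [k Hk].
  exists k, N'; split; assumption.
Qed.

Lemma Forall2_pd_joins_in ps qs :
  Forall2 pd_joins ps qs -> exists m, Forall2 (pd_joins_in m) ps qs.
Proof.
  induction 1 as [|p q ps qs Hpq _ [m Hm]]; [exists 0; constructor|].
  destruct (pd_joins_in_of_pd_joins Hpq) as [k Hk].
  exists (Nat.max k m); constructor.
  - apply pd_joins_in_mono with k; [lia | exact Hk].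
  - apply Forall2_impl with (pd_joins_in m); [|exact Hm].
    intros; apply pd_joins_in_mono with m; [lia | assumption].
Qed.

Lemma pd_joins_refl M : pd_joins M M.
Proof. exists M; split; apply rt_refl. Qed.

Lemma pd_joins_sstep M M1 N : M ~>s M1 -> pd_joins M1 N -> pd_joins M N.
Proof.
  intros HM (N' & HM1 & HN); exists N'; split; [|exact HN].
  apply rt_trans with M1; [apply rt_step, pd_surf, HM | exact HM1].
Qed.

Lemma pd_joins_lam P Q : snormal s (Lam P) -> snormal s (Lam Q) ->
  pd_joins P Q -> pd_joins (Lam P) (Lam Q).
Proof.
  intros HsP HsQ (Q' & HP & HQ); exists (Lam Q'); split.
  - apply pd_rt_lam; assumption.
  - apply ustep_rt_lam; assumption.
Qed.

Lemma pd_joins_app P Q P1 Q1 : snormal s (App P Q) -> snormal s (App P1 Q1) ->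
  pd_joins P P1 -> pd_joins Q Q1 -> pd_joins (App P Q) (App P1 Q1).
Proof.
  intros Hs Hs1 HP HQ.
  destruct (pd_joins_in_of_pd_joins HP) as [k HkP], (pd_joins_in_of_pd_joins HQ) as [l HlQ].
  destruct (pd_joins_in_mono (Nat.le_max_l k l) HkP) as (P' & HP' & HP1).
  destruct (pd_joins_in_mono (Nat.le_max_r k l) HlQ) as (Q' & HQ' & HQ1).
  exists (App P' Q'); split.
  - apply pd_iter_app with (Nat.max k l); assumption.
  - apply ustep_rt_app; assumption.
Qed.

Lemma pd_joins_op o ps qs : Forall2 pd_joins ps qs -> pd_joins (Op o ps) (Op o qs).
Proof.
  intros Hpq; destruct (Forall2_pd_joins_in Hpq) as [m Hm].
  destruct (@Forall2_exists_mid _ _ _ (iter_rel (pd s) m) (fun r q => q ~>U* r) _ _ Hm)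
    as (rs & Hpr & Hrq).
  exists (Op o rs); split.
  - apply pd_iter_op with m; exact Hpr.
  - apply ustep_rt_op, Forall2_flip, Hrq.
Qed.

Lemma ustep_not_snormal M M' : ~ snormal s M -> M ~>U M' -> M ~>s M'.
Proof. intros Hs HM; destruct HM; [assumption | contradiction..]. Qed.

Lemma ustep_iter_var m x N : iter_rel (ustep s) m (Var x) N -> N = Var x.
Proof.
  destruct m as [|m]; [intros ->; reflexivity|].
  intros (z & Hz & _); exfalso; inversion Hz; subst.
  eapply snormal_var; eassumption.
Qed.

Lemma ustep_iter_lam m P N : snormal s (Lam P) -> iter_rel (ustep s) m (Lam P) N ->
  exists Q, N = Lam Q /\ iter_rel (ustep s) m P Q.
Proof.
  revert P; induction m as [|m IH]; intros P Hs HN.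
  - exists P; split; [symmetry; exact HN | reflexivity].
  - destruct HN as (z & Hz & HzN).
    destruct (ustep_snormal_shape Hz Hs) as [Hsz _].
    inversion Hz; subst; [exfalso; eapply Hs; eassumption|].
    destruct (IH _ Hsz HzN) as (Q & -> & HQ).
    exists Q; split; [reflexivity | eexists; split; eassumption].
Qed.

Lemma ustep_iter_app m P Q N : snormal s (App P Q) -> iter_rel (ustep s) m (App P Q) N ->
  exists P1 Q1, N = App P1 Q1 /\
    iter_rel_upto (ustep s) m P P1 /\ iter_rel_upto (ustep s) m Q Q1.
Proof.
  revert P Q; induction m as [|m IH]; intros P Q Hs HN.
  - exists P, Q; split; [symmetry; exact HN | split; apply iter_rel_upto_refl].
  - destruct HN as (z & Hz & HzN).
    destruct (ustep_snormal_shape Hz Hs) as [Hsz _].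
    inversion Hz; subst; [exfalso; eapply Hs; eassumption| |];
      destruct (IH _ _ Hsz HzN) as (P1 & Q1 & -> & HP1 & HQ1);
      exists P1, Q1; (split; [reflexivity|]).
    + split; [eapply iter_rel_upto_step; eassumption | apply iter_rel_upto_mono with m; [lia | exact HQ1]].
    + split; [apply iter_rel_upto_mono with m; [lia | exact HP1] | eapply iter_rel_upto_step; eassumption].
Qed.

Lemma ustep_iter_op m o ps N : iter_rel (ustep s) m (Op o ps) N ->
  exists qs, N = Op o qs /\ Forall2 (iter_rel_upto (ustep s) m) ps qs.
Proof.
  revert ps; induction m as [|m IH]; intros ps HN.
  - exists ps; split; [symmetry; exact HN|].
    clear HN; induction ps as [|p ps IH]; constructor; [apply iter_rel_upto_refl | exact IH].
  - destruct HN as (z & Hz & HzN).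
    inversion Hz; subst; [exfalso; eapply snormal_op; eassumption|].
    destruct (IH _ HzN) as (qs & -> & Hqs); exists qs; split; [reflexivity|].
    apply Forall2_app_inv_l in Hqs as (qs1 & qs2 & Hqs1 & Hqs2 & ->).
    inversion Hqs2 as [|? q ? qs2' Hq Hqs2']; subst.
    assert (Hweak : forall l l' : list T, Forall2 (iter_rel_upto (ustep s) m) l l' ->
                                        Forall2 (iter_rel_upto (ustep s) (S m)) l l')
      by (apply Forall2_impl; intros ? ?; apply iter_rel_upto_mono; lia).
    apply Forall2_app; [apply Hweak, Hqs1|].
    constructor; [eapply iter_rel_upto_step; eassumption | apply Hweak, Hqs2'].
Qed.

Lemma pd_joins_of_iter_upto n :
  (forall m, m < n -> forall M N, iter_rel (ustep s) m M N -> pd_joins M N) ->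
  forall M N, iter_rel_upto (ustep s) n M N -> pd_joins M N.
Proof.
  intros IHn.
  assert (Hsurf : forall M N, ~ snormal s M -> iter_rel_upto (ustep s) n M N -> pd_joins M N).
  { intros M N Hs ([|m] & Hm & HN); [rewrite HN; apply pd_joins_refl|].
    destruct HN as (z & Hz & HzN).
    apply pd_joins_sstep with z; [exact (ustep_not_snormal Hs Hz)|].
    apply (IHn m); [lia | exact HzN]. }
  intros M; induction M as [x|P IHP|P Q IHP IHQ|o ps IHps] using term_ind_nested;
    intros N HN.
  - destruct HN as (m & _ & HN); rewrite (ustep_iter_var HN); apply pd_joins_refl.
  - destruct (classic (snormal s (Lam P))) as [Hs|Hs]; [|exact (Hsurf _ _ Hs HN)].
    destruct HN as (m & Hm & HN).
    pose proof (ustep_rt_snormal (iter_rel_rt HN) Hs) as HsN.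
    destruct (ustep_iter_lam Hs HN) as (Q & -> & HQ).
    apply pd_joins_lam; [assumption | assumption | apply IHP; exists m; split; assumption].
  - destruct (classic (snormal s (App P Q))) as [Hs|Hs]; [|exact (Hsurf _ _ Hs HN)].
    destruct HN as (m & Hm & HN).
    pose proof (ustep_rt_snormal (iter_rel_rt HN) Hs) as HsN.
    destruct (ustep_iter_app Hs HN) as (P1 & Q1 & -> & HP1 & HQ1).
    apply pd_joins_app; [assumption | assumption | apply IHP | apply IHQ];
      eapply iter_rel_upto_mono; eassumption.
  - destruct HN as (m & Hm & HN); destruct (ustep_iter_op HN) as (qs & -> & Hqs).
    apply pd_joins_op; eapply Forall_Forall2_impl; [|exact IHps|exact Hqs].
    intros p q IHp Hpq; apply IHp; eapply iter_rel_upto_mono; eassumption.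
Qed.

Lemma ustep_rt_pd_joins M N : M ~>U* N -> pd_joins M N.
Proof.
  intros HMN; destruct (rt_iter_rel HMN) as [n Hn]; clear HMN.
  revert M N Hn; induction n as [n IHn] using lt_wf_ind.
  intros M N Hn; apply (pd_joins_of_iter_upto IHn); exists n; split; [apply le_n | exact Hn].
Qed.

Lemma pd_rt_ustep_rt M N : M ~>pd* N -> M ~>U* N.
Proof.
  induction 1; [apply pd_ustep_rt; assumption | apply rt_refl | eapply rt_trans; eassumption].
Qed.

End Unbiased.

Theorem mainTheorem14 (O : Type) (ar : O -> nat) (s : calculus) :
  (forall M N : term O, wf ar M -> pd s M N -> clos_refl_trans _ (ustep s) M N) /\
  (forall M N : term O, wf ar M ->
      clos_refl_trans _ (pd s) M N -> clos_refl_trans _ (ustep s) M N) /\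
  (forall M N : term O, wf ar M -> clos_refl_trans _ (ustep s) M N ->
      exists N', clos_refl_trans _ (pd s) M N' /\ clos_refl_trans _ (ustep s) N N').
Proof.
  split; [|split]; intros M N _.
  - apply pd_ustep_rt.
  - apply pd_rt_ustep_rt.
  - apply ustep_rt_pd_joins.
Qed.
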